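(* Let $G$ be a finite two-player zero-sum simultaneous-move game with perfect information on which SM-MCTS is run, let $h$ be a decision node of $G$, and let $\epsilon,c\ge0$. Let $A$ be an $\epsilon$-Hannan consistent algorithm which generates the sequence of actions $(i(t))$ of player 1 at $h$, and let $(j(t))$ be the actions chosen by the adversary (player 2) at $h$. Let $v_{ij}$ be the value of the subgame rooted at the child $h_{ij}$. If almost surely $\limsup_{n\to\infty}|\bar s_{ij}(n)-v_{ij}|\le c\epsilon$ for each $i,j$, and $A$ is $\epsilon$-UPO, then almost surely \[\limsup_{t\to\infty}\frac1t\left(\max_{i_0}\sum_{s=1}^t v_{i_0j(s)}-\sum_{s=1}^t v_{i(s)j(s)}\right)\le 2(c+1)\epsilon.\] Consequently the choice of actions $(i(t))$ made by $A$ is $2(c+1)\epsilon$-Hannan consistent with respect to the matrix game $(v_{ij})$.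
   Context: Game: finite rooted tree; decision nodes $h$ have finite action sets $\mathcal A_1(h),\mathcal A_2(h)$, joint action $(i,j)$ leading to child $h_{ij}$; terminal utilities $u_1\in[0,1]$, $u_2=-u_1$; the value of a subgame is its minimax value. SM-MCTS: each node of the search tree holds one bandit-algorithm instance per player; at each visit of $h$ the instances choose $(i,j)$, the search recursively returns a value $x$ from $h_{ij}$, player 1's instance at $h$ is updated with reward $x$ (player 2's with $1-x$), and $x$ is passed upward. Index visits of $h$ by $t=1,2,\dots$; $i(t),j(t)$ are the actions chosen; $t_{ij}$ is the number of visits $\le t$ with joint action $(i,j)$. $s_{ij}(n)$ is the value returned from $h_{ij}$ the $n$-th time $(i,j)$ is chosen at $h$; $\bar s_{ij}(n)=\frac1n\sum_{m\le n}s_{ij}(m)$. The bandit reward of action $i$ for player 1 at visit $t$ is $x_i(t)=s_{ij(t)}((t-1)_{ij(t)}+1)$, i.e. the value that would be observed the next time $(i,j(t))$ is chosen. Bandit regret $r(t)=\frac1t(\max_k\sum_{s\le t}x_k(s)-\sum_{s\le t}x_{i(s)}(s))$; $\epsilon$-Hannan consistent: $\limsup_t r(t)\le\epsilon$ a.s. against every adversary. UPO: let $t^*_{ij}(k)=\min\{t:t_{ij}=k\}$ (with $t^*_{ij}(0)=0$), $w_{ij}(n)=1+|\{t:t^*_{ij}(n-1)\le t\le t^*_{ij}(n),\ j(t)=j,\ i(t)\ne i\}|$, $\tilde s_{ij}(n)=\frac{\sum_{m\le n}w_{ij}(m)s_{ij}(m)}{\sum_{m\le n}w_{ij}(m)}$.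 $A$ is $\epsilon$-UPO if for every such game, every node $h$ and all $i,j$, almost surely $\limsup_{n\to\infty}|\tilde s_{ij}(n)-\bar s_{ij}(n)|\le\epsilon$. *)

From HB Require Import structures.
From mathcomp Require Import all_boot all_order all_algebra.
From mathcomp Require Import all_classical all_reals.
From mathcomp Require Import topology normedtype sequences measure probability.

Set Implicit Arguments.
Unset Strict Implicit.
Unset Printing Implicit Defensive.

Import Order.TTheory GRing.Theory Num.Theory.
Import numFieldNormedType.Exports.
Local Open Scope ring_scope.

(* Quantities at a fixed decision node h along one run of SM-MCTS.
   Visits of h are indexed by t = 1, 2, ...  (index 0 is unused).
   ia t / ja t : joint action chosen at the t-th visit;
   s i j n     : value returned from child h_ij the n-th time (i,j) is
                 chosen at h (n = 1, 2, ...; index 0 unused). *)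

Section NodeRun.
Variables (R : realType) (I J : finType).
Variables (ia : nat -> I) (ja : nat -> J).

Definition visit_count (i : I) (j : J) (t : nat) : nat :=
  \sum_(1 <= u < t.+1) ((ia u == i) && (ja u == j) : nat).

Variable s : I -> J -> nat -> R.

Definition sbar (i : I) (j : J) (n : nat) : R :=
  n%:R^-1 * \sum_(1 <= m < n.+1) s i j m.

Definition bandit_reward (k : I) (t : nat) : R :=
  s k (ja t) (visit_count k (ja t) t.-1).+1.

Definition fmax (F : I -> R) : R := sup (range F).

Definition bandit_regret (t : nat) : R :=
  t%:R^-1 * (fmax (fun k => \sum_(1 <= u < t.+1) bandit_reward k u)
             - \sum_(1 <= u < t.+1) bandit_reward (ia u) u).

(* w_ij(n) counted only over visits t <= T:
   1 + |{ t <= T : t*_ij(n-1) <= t <= t*_ij(n), j(t) = j, i(t) <> i }|.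
   For t >= 1 with i(t) <> i, the condition t*_ij(n-1) <= t <= t*_ij(n)
   is equivalent to t_ij = n-1. *)
Definition weight_upto (i : I) (j : J) (T n : nat) : nat :=
  1 + \sum_(1 <= t < T.+1)
        [&& ja t == j, ia t != i & visit_count i j t == n.-1].

Definition stilde_upto (i : I) (j : J) (T n : nat) : R :=
  (\sum_(1 <= m < n.+1) (weight_upto i j T m)%:R * s i j m) /
  (\sum_(1 <= m < n.+1) (weight_upto i j T m)%:R).

(* \tilde s_ij(n): the weights w_ij(m) are the limits (T -> oo) of
   weight_upto; a weight may be infinite (when t*_ij(m) = oo), and the
   weighted average is then understood as the limit of the truncated ones. *)
Definition stilde (i : I) (j : J) (n : nat) : R :=
  limn (fun T => stilde_upto i j T n).

Definition matrix_regret (v : I -> J -> R) (t : nat) : R :=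
  t%:R^-1 * (fmax (fun i0 => \sum_(1 <= u < t.+1) v i0 (ja u))
             - \sum_(1 <= u < t.+1) v (ia u) (ja u)).

End NodeRun.

Definition limsup_le (R : realType) (u : nat -> R) (a : R) : Prop :=
  (limn_esup (fun n => (u n)%:E) <= a%:E)%E.

From HB Require Import structures.
From mathcomp Require Import all_boot all_order all_algebra.
From mathcomp Require Import all_classical all_reals ereal.
From mathcomp Require Import topology normedtype sequences measure probability.
From mathcomp Require Import zify ring lra.
Set Implicit Arguments.
Unset Strict Implicit.
Unset Printing Implicit Defensive.

Import Order.TTheory GRing.Theory Num.Theory.
Import numFieldNormedType.Exports.
Local Open Scope ring_scope.

(* At the visits where player 2 plays [j], the bandit rewards of action [i]
   are the values [s i j n], the [n]-th one being collected once when [(i,j)]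
   is played for the [n]-th time and once at every visit with [j(t) = j],
   [i(t) <> i] that happens while [(i,j)] has been played [n-1] times: its
   multiplicity is exactly the UPO weight [w_ij(n)], up to the pending value.
   Hence an eventual lower bound [L] on the weighted averages [\tilde s_ij]
   yields a lower bound [L] per visit of column [j] on the cumulated bandit
   reward of [i], up to a constant.  By UPO and the hypothesis on [\bar s],
   [\tilde s_ij] is eventually above [v_ij - (c+1) eps], so every fixed
   action earns at least its matrix payoff minus [(c+1) eps] per step, while
   the rewards actually collected exceed the matrix payoffs of the played
   actions by at most [c eps] per step.  Adding the [eps] bandit regret
   gives [2 (c+1) eps].  When [(i,j)] is played only finitely often, the
   weight of the pending value grows without bound (or column [j] is played
   finitely often), and the bound is checked directly. *)

Lemma limsup_leP (R : realType) (u : nat -> R) (a : R) :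
  limsup_le u a <->
  forall e, 0 < e -> exists N, forall n, (N <= n)%N -> u n <= a + e.
Proof.
rewrite /limsup_le /limn_esup /limf_esup; split=> [H e e0 | H].
  have : (ereal_inf [set ereal_sup [set (u x)%:E | x in V]
            | V in (\oo : set_system nat)] < (a + e)%:E)%E.
    by apply: le_lt_trans H _; rewrite lte_fin ltrDl.
  case/ereal_inf_lt => _ [V [N _ HV] <-] Hlt; exists N => n Nn.
  rewrite -lee_fin; apply: le_trans (ltW Hlt).
  by apply: ereal_sup_ubound; exists n => //; apply: HV.
apply/lee_addgt0Pr => e e0; have [N HN] := H e e0.
apply: (@le_trans _ _ (ereal_sup [set (u x)%:E | x in (fun n => (N <= n)%N : Prop)])).
  by apply: ereal_inf_lbound; exists (fun n => (N <= n)%N : Prop) => //; exists N.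
by apply: ge_ereal_sup => _ [n Hn <-]; rewrite -EFinD lee_fin; apply: HN.
Qed.

Lemma fmax_ub (R : realType) (I : finType) (F : I -> R) i : F i <= fmax F.
Proof.
apply: ub_le_sup; last by exists i.
exists (\sum_k `|F k|) => _ [k _ <-].
rewrite (bigD1 k) //=; apply: le_trans (ler_norm _) _.
by rewrite lerDl; apply: sumr_ge0.
Qed.

Lemma fmax_le (R : realType) (I : finType) (F : I -> R) b (i0 : I) :
  (forall i, F i <= b) -> fmax F <= b.
Proof. by move=> h; apply: ge_sup; [exists (F i0), i0 | move=> _ [k _ <-]]. Qed.

Lemma sumr_eq_mul (R : pzSemiRingType) (T : finType) (F : T -> R) x0 :
  \sum_x ((x0 == x)%:R * F x) = F x0.
Proof.
rewrite (bigD1 x0) //= eqxx mul1r big1 ?addr0 // => x /negbTE.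
by rewrite eq_sym => ->; rewrite mul0r.
Qed.

Lemma sumr_nat_eq_mul (R : pzSemiRingType) (h : nat -> R) n k :
  (1 <= k <= n)%N -> \sum_(1 <= m < n.+1) ((m == k)%:R * h m) = h k.
Proof.
move=> kn; rewrite (bigD1_seq k) ?mem_index_iota ?iota_uniq //= eqxx mul1r.
by rewrite big1 ?addr0 // => m /negbTE ->; rewrite mul0r.
Qed.

Lemma nat_unbounded_or_bounded (f : nat -> nat) :
  (forall M, exists t, (M <= f t)%N) \/ exists M, forall t, (f t <= M)%N.
Proof.
have [unb|/existsNP [M /forallNP fM]] := pselect (forall M, exists t, (M <= f t)%N).
  by left.
by right; exists M => t; apply: ltnW; rewrite ltnNge; apply/negP/fM.
Qed.

Lemma nondecreasing_bounded_eventually_const (f : nat -> nat) M :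
  {homo f : t t' / (t <= t')%N} -> (forall t, (f t <= M)%N) ->
  exists t1, forall t, (t1 <= t)%N -> f t = f t1.
Proof.
move=> f_mono f_le.
pose P := [pred m | `[< exists t, f t = m >]].
have exP : exists m, P m by exists (f 0%N); apply/asboolP; exists 0%N.
have ubP m : P m -> (m <= M)%N by move=> /asboolP [t <-].
case: (ex_maxnP exP ubP) => _ /asboolP [t1 <-] f_max.
exists t1 => t t1t; apply/eqP; rewrite eqn_leq (f_mono _ _ t1t) andbT.
by apply: f_max; apply/asboolP; exists t.
Qed.

Lemma eventually_le_mulrn (R : archiRealFieldType) (C e : R) : 0 < e ->
  exists N, forall t, (N <= t)%N -> C <= t%:R * e.
Proof.
move=> e0; exists (Num.Def.truncn (C / e)).+1 => t Nt.
rewrite -ler_pdivrMr //; apply/ltW/(lt_le_trans (truncnS_gt _)).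
by rewrite ler_nat.
Qed.

Lemma sum_sub_le_of_mean_near (R : realFieldType) (f : nat -> R) v a N :
  0 <= a -> (forall n, 0 <= f n <= 1) ->
  (forall n, (N <= n)%N -> `|n%:R^-1 * \sum_(1 <= m < n.+1) f m - v| <= a) ->
  forall K, \sum_(1 <= n < K.+1) (f n - v) <= K%:R * a + N%:R * (1 + `|v|).
Proof.
move=> a0 f01 H K.
have hv := ler_norm (- v); rewrite normrN in hv.
have hv0 : 0 <= `|v| by [].
have hNv : 0 <= N%:R * (1 + `|v|) by apply: mulr_ge0 => //; lra.
have hKa : 0 <= K%:R * a by apply: mulr_ge0.
case: (leqP N K) => NK; last first.
  have : \sum_(1 <= n < K.+1) (f n - v) <= K%:R * (1 + `|v|).
    have -> : K%:R * (1 + `|v|) = \sum_(1 <= n < K.+1) (1 + `|v|).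
      by rewrite sumr_const_nat subn1 /= mulr_natl.
    by apply: ler_sum => n _; have := f01 n; lra.
  have : (K%:R : R) <= N%:R by rewrite ler_nat ltnW.
  nra.
case: K NK hKa => [|K] NK hKa; first by rewrite big_geq // mul0r add0r.
have hK : (0 : R) < K.+1%:R by rewrite ltr0n.
move/ler_normlW: (H _ NK); set S := \sum_(1 <= i < K.+2) f i => h.
rewrite sumrB sumr_const_nat subn1 /= -/S -mulr_natl.
have : S <= K.+1%:R * (a + v).
  by rewrite -ler_pdivrMl // -lerBlDr.
nra.
Qed.

Section Visits.
Variables (R : realType) (I J : finType) (ia : nat -> I) (ja : nat -> J).

Local Notation visits := (visit_count ia ja).

Lemma visit_count0 i j : visits i j 0 = 0%N.
Proof. by rewrite /visit_count big_geq. Qed.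

Lemma visit_countS i j t :
  visits i j t.+1 = (visits i j t + ((ia t.+1 == i) && (ja t.+1 == j)))%N.
Proof. by rewrite /visit_count big_nat_recr. Qed.

Lemma visit_count_mono i j : {homo visits i j : t t' / (t <= t')%N}.
Proof. by apply: homo_leq leqnn leq_trans _ => t; rewrite visit_countS leq_addr. Qed.

Definition column_visits j t : nat := \sum_(1 <= u < t.+1) (ja u == j).

Lemma column_visitsS j t :
  column_visits j t.+1 = (column_visits j t + (ja t.+1 == j))%N.
Proof. by rewrite /column_visits big_nat_recr. Qed.

Lemma column_visits_mono j : {homo column_visits j : t t' / (t <= t')%N}.
Proof. by apply: homo_leq leqnn leq_trans _ => t; rewrite column_visitsS leq_addr. Qed.

Lemma column_visits_le j t : (column_visits j t <= t)%N.
Proof.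
elim: t => [|t IH]; first by rewrite /column_visits big_geq.
by rewrite column_visitsS; case: (ja t.+1 == j) => /=; lia.
Qed.

Definition offdiag_visits i j t n : nat :=
  \sum_(1 <= u < t.+1) [&& ja u == j, ia u != i & visits i j u == n.-1].

Lemma weight_uptoE i j t n :
  weight_upto ia ja i j t n = (1 + offdiag_visits i j t n)%N.
Proof. by []. Qed.

Lemma offdiag_visitsS i j t n : offdiag_visits i j t.+1 n =
  (offdiag_visits i j t n
   + [&& ja t.+1 == j, ia t.+1 != i & visits i j t.+1 == n.-1])%N.
Proof. by rewrite /offdiag_visits big_nat_recr. Qed.

Lemma offdiag_visits_mono i j n :
  {homo offdiag_visits i j ^~ n : t t' / (t <= t')%N}.
Proof. by apply: homo_leq leqnn leq_trans _ => t; rewrite offdiag_visitsS leq_addr. Qed.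

Lemma offdiag_visits_stable i j t t' n : (1 <= n <= visits i j t)%N ->
  (t <= t')%N -> offdiag_visits i j t' n = offdiag_visits i j t n.
Proof.
move=> /andP[n1 nc] /subnKC <-; elim: (t' - t)%N => [|k IH]; first by rewrite addn0.
rewrite addnS offdiag_visitsS IH.
have : (visits i j t <= visits i j (t + k).+1)%N by apply: visit_count_mono; lia.
by case: (visits i j _ == n.-1) /eqP => [->|]; [lia | rewrite !andbF addn0].
Qed.

Lemma offdiag_visits_eq0 i j t n : (visits i j t + 2 <= n)%N ->
  offdiag_visits i j t n = 0%N.
Proof.
move=> H; rewrite /offdiag_visits big1_seq // => u.
rewrite mem_index_iota => /andP [_ ut].
have : (visits i j u <= visits i j t)%N by apply: visit_count_mono; lia.
by case: (visits i j u == n.-1) /eqP => [->|]; [lia | rewrite !andbF].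
Qed.

Lemma sum_diag_visits i j (g : nat -> R) t :
  \sum_(1 <= u < t.+1) (((ia u == i) && (ja u == j))%:R * g (visits i j u))
  = \sum_(1 <= n < (visits i j t).+1) g n.
Proof.
elim: t => [|t IH]; first by rewrite visit_count0 !big_geq.
rewrite big_nat_recr //= IH visit_countS.
case: (_ && _) => /=; last by rewrite mul0r addr0 addn0.
by rewrite addn1 mul1r [in RHS]big_nat_recr.
Qed.

Lemma sum_offdiag_visits i j (f : nat -> R) t :
  \sum_(1 <= u < t.+1) (((ja u == j) && (ia u != i))%:R * f (visits i j u).+1)
  = \sum_(1 <= n < (visits i j t).+2) ((offdiag_visits i j t n)%:R * f n).
Proof.
transitivity (\sum_(1 <= u < t.+1) \sum_(1 <= n < (visits i j t).+2)
   (((ja u == j) && (ia u != i))%:R * ((n == (visits i j u).+1)%:R * f n))).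
  apply: eq_big_nat => u /andP [_ ut]; rewrite -mulr_sumr sumr_nat_eq_mul //.
  by rewrite /= ltnS; apply: visit_count_mono; lia.
rewrite exchange_big /=; apply: eq_big_nat => n /andP[n1 _].
rewrite /offdiag_visits natr_sum mulr_suml; apply: eq_bigr => u _.
have -> : (n == (visits i j u).+1) = (visits i j u == n.-1).
  by case: n n1 => // n _; rewrite eqSS eq_sym.
by rewrite mulrA -natrM mulnb andbA.
Qed.

Lemma sum_column_visits (F : J -> R) t :
  \sum_j ((column_visits j t)%:R * F j) = \sum_(1 <= u < t.+1) F (ja u).
Proof.
under eq_bigr => j _ do rewrite /column_visits natr_sum mulr_suml.
by rewrite exchange_big /=; apply: eq_bigr => u _; rewrite sumr_eq_mul.
Qed.

Lemma sum_visits_regroup (g : I -> J -> nat -> R) t :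
  \sum_i \sum_j \sum_(1 <= n < (visits i j t).+1) g i j n =
  \sum_(1 <= u < t.+1) g (ia u) (ja u) (visits (ia u) (ja u) u).
Proof.
under eq_bigr => i _ do under eq_bigr => j _ do rewrite -sum_diag_visits.
under eq_bigr => i _ do rewrite exchange_big.
rewrite exchange_big /=; apply: eq_bigr => u _.
under eq_bigr => i _ do under eq_bigr => j _ do
  rewrite -mulnb natrM -mulrA.
by under eq_bigr => i _ do rewrite -mulr_sumr sumr_eq_mul; rewrite sumr_eq_mul.
Qed.

End Visits.

Section Rewards.
Variables (R : realType) (I J : finType) (ia : nat -> I) (ja : nat -> J).
Variable s : I -> J -> nat -> R.

Local Notation visits := (visit_count ia ja).
Local Notation column_visits := (column_visits ja).
Local Notation offdiag_visits := (offdiag_visits ia ja).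
Local Notation W := (weight_upto ia ja).

Definition column_reward k j t : R :=
  \sum_(1 <= u < t.+1) ((ja u == j)%:R * s k j (visits k j u.-1).+1).

Definition wnum i j t n : R := \sum_(1 <= m < n.+1) ((W i j t m)%:R * s i j m).
Definition wden i j t n : R := \sum_(1 <= m < n.+1) (W i j t m)%:R.

Lemma bandit_reward_sumE k t :
  \sum_(1 <= u < t.+1) bandit_reward ia ja s k u = \sum_j column_reward k j t.
Proof.
rewrite /column_reward exchange_big /=; apply: eq_bigr => u _.
by rewrite sumr_eq_mul.
Qed.

Lemma bandit_reward_played t : (1 <= t)%N ->
  bandit_reward ia ja s (ia t) t = s (ia t) (ja t) (visits (ia t) (ja t) t).
Proof. by case: t => // t _; rewrite /bandit_reward visit_countS !eqxx addn1. Qed.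

Lemma column_reward_split i j t : column_reward i j t =
  \sum_(1 <= u < t.+1) (((ia u == i) && (ja u == j))%:R * s i j (visits i j u))
  + \sum_(1 <= u < t.+1) (((ja u == j) && (ia u != i))%:R * s i j (visits i j u).+1).
Proof.
rewrite /column_reward -big_split /=; apply: eq_big_nat => -[|u] //= _.
rewrite visit_countS.
by case: (ia u.+1 == i); case: (ja u.+1 == j);
  rewrite /= ?addn0 ?addn1 ?mul0r ?mul1r ?addr0 ?add0r.
Qed.

Lemma column_rewardE i j t :
  column_reward i j t = wnum i j t (visits i j t).+1 - s i j (visits i j t).+1.
Proof.
rewrite column_reward_split sum_diag_visits sum_offdiag_visits /wnum.
under [in RHS]eq_bigr => n _ do rewrite weight_uptoE natrD mulrDl mul1r.
by rewrite big_split /= [in RHS]big_nat_recr //=; lra.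
Qed.

Lemma column_visits_split i j t : column_visits j t =
  (visits i j t + \sum_(1 <= u < t.+1) ((ja u == j) && (ia u != i)))%N.
Proof.
elim: t => [|t IH]; first by rewrite /column_visits visit_count0 !big_geq.
rewrite column_visitsS IH visit_countS [in RHS]big_nat_recr //=.
by case: (ja t.+1 == j); case: (ia t.+1 == i); rewrite /=; lia.
Qed.

Lemma wden_total i j t :
  wden i j t (visits i j t).+1 = (column_visits j t).+1%:R.
Proof.
rewrite /wden; under eq_bigr => n _ do rewrite weight_uptoE natrD.
rewrite big_split /=.
under [X in _ + X = _]eq_bigr => n _ do rewrite -[(offdiag_visits i j t n)%:R]mulr1.
rewrite -(sum_offdiag_visits ia ja i j (fun=> 1)) sumr_const_nat.
rewrite (column_visits_split i) -addSn natrD natr_sum subSS subn0.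
by congr (_ + _); apply: eq_bigr => u _; rewrite mulr1.
Qed.

Lemma stilde_uptoE i j t n : stilde_upto ia ja s i j t n = wnum i j t n / wden i j t n.
Proof. by []. Qed.

Lemma wnumS i j t n : wnum i j t n.+1 = wnum i j t n + (W i j t n.+1)%:R * s i j n.+1.
Proof. by rewrite /wnum big_nat_recr. Qed.

Lemma wdenS i j t n : wden i j t n.+1 = wden i j t n + (W i j t n.+1)%:R.
Proof. by rewrite /wden big_nat_recr. Qed.

Lemma wden_ge i j t n : n%:R <= wden i j t n.
Proof.
elim: n => [|n IH]; first by rewrite /wden big_geq.
by rewrite wdenS -natr1 lerD // weight_uptoE ler1n.
Qed.

Lemma weight_upto_stable i j t t' m : (1 <= m <= visits i j t)%N ->
  (t <= t')%N -> W i j t' m = W i j t m.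
Proof. by move=> mc tt'; rewrite !weight_uptoE (offdiag_visits_stable mc tt'). Qed.

Lemma wnum_stable i j t t' n : (n <= visits i j t)%N -> (t <= t')%N ->
  wnum i j t' n = wnum i j t n.
Proof.
move=> nc tt'; apply: eq_big_nat => m /andP [m1 mn].
by rewrite (@weight_upto_stable _ _ t) //; lia.
Qed.

Lemma wden_stable i j t t' n : (n <= visits i j t)%N -> (t <= t')%N ->
  wden i j t' n = wden i j t n.
Proof.
move=> nc tt'; apply: eq_big_nat => m /andP [m1 mn].
by rewrite (@weight_upto_stable _ _ t) //; lia.
Qed.

Lemma stilde_stable i j t n : (n <= visits i j t)%N ->
  stilde ia ja s i j n = stilde_upto ia ja s i j t n.
Proof.
move=> nc; apply: norm_lim_near_cst; exists t => // T /= tT.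
by rewrite !stilde_uptoE (wnum_stable nc tT) (wden_stable nc tT).
Qed.

Lemma mulr_wden_le_wnum i j t n L : (1 <= n)%N ->
  L <= stilde_upto ia ja s i j t n -> L * wden i j t n <= wnum i j t n.
Proof.
move=> n1; rewrite stilde_uptoE ler_pdivlMr //.
by apply: lt_le_trans (wden_ge i j t n); rewrite ltr0n.
Qed.

Section LowerBound.
Variables (i : I) (j : J) (L : R) (n0 : nat).
Hypothesis stilde_ge : forall n, (n0 <= n)%N -> L <= stilde ia ja s i j n.

(* The weight of [s i j K.+1] at time [t] is at most its final weight, and
   raising that weight moves the average towards [s i j K.+1]. *)
Lemma wnum_ge_visits_unbounded : (1 <= n0)%N ->
  (forall M, exists t, (M <= visits i j t)%N) ->
  forall t, (n0 <= visits i j t)%N ->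
  L * (column_visits j t).+1%:R <= wnum i j t (visits i j t).+1.
Proof.
move=> n0_gt0 unb t Kn0; set K := visits i j t.
have h1 : L * wden i j t K <= wnum i j t K.
  by apply: mulr_wden_le_wnum; [lia | rewrite -stilde_stable // stilde_ge].
have [t'' Ht''] := unb K.+1; set t' := maxn t t''.
have tt' : (t <= t')%N by rewrite leq_maxl.
have Kt' : (K.+1 <= visits i j t')%N.
  exact: leq_trans Ht'' (visit_count_mono ia ja i j (leq_maxr t t'')).
have h2 : L * wden i j t' K.+1 <= wnum i j t' K.+1.
  by apply: mulr_wden_le_wnum => //; rewrite -stilde_stable // stilde_ge //; lia.
rewrite wnumS wdenS (wnum_stable (leqnn K) tt') (wden_stable (leqnn K) tt') in h2.
rewrite -(wden_total i j t) -/K wdenS wnumS.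
have hw : ((W i j t K.+1)%:R : R) <= (W i j t' K.+1)%:R.
  by rewrite ler_nat !weight_uptoE leq_add2l offdiag_visits_mono.
have hw0 : (0 : R) <= (W i j t K.+1)%:R by [].
by case: (lerP L (s i j K.+1)); nra.
Qed.

Variable t1 : nat.
Hypothesis visits_frozen : forall t, (t1 <= t)%N -> visits i j t = visits i j t1.
Local Notation K := (visits i j t1).

Lemma weight_upto_frozenE T m : (t1 <= T)%N -> (1 <= m)%N ->
  ((W i j T m)%:R : R) =
  (W i j t1 m)%:R + (m == K.+1)%:R * ((W i j T K.+1)%:R - (W i j t1 K.+1)%:R).
Proof.
move=> t1T m1; case: (m =P K.+1) => [->|mK]; first by rewrite mul1r; lra.
rewrite mul0r addr0; case: (leqP m K) => mle.
  by rewrite (@weight_upto_stable _ _ t1) //; apply/andP.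
rewrite !weight_uptoE !offdiag_visits_eq0 // ?visits_frozen //; lia.
Qed.

Lemma wnum_frozen T n : (t1 <= T)%N -> (K.+1 <= n)%N ->
  wnum i j T n = wnum i j t1 n
                 + ((W i j T K.+1)%:R - (W i j t1 K.+1)%:R) * s i j K.+1.
Proof.
move=> t1T Kn.
rewrite -(@sumr_nat_eq_mul _ (fun m => ((W i j T m)%:R - (W i j t1 m)%:R) * s i j m) n K.+1) ?Kn //.
rewrite /wnum -big_split /=; apply: eq_big_nat => m /andP [m1 _].
by rewrite (weight_upto_frozenE t1T m1); case: (m == K.+1); rewrite ?mul1r ?mul0r; lra.
Qed.

Lemma wden_frozen T n : (t1 <= T)%N -> (K.+1 <= n)%N ->
  wden i j T n = wden i j t1 n + ((W i j T K.+1)%:R - (W i j t1 K.+1)%:R).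
Proof.
move=> t1T Kn.
rewrite -(@sumr_nat_eq_mul _ (fun m => (W i j T m)%:R - (W i j t1 m)%:R) n K.+1) ?Kn //.
rewrite /wden -big_split /=; apply: eq_big_nat => m /andP [m1 _].
by rewrite (weight_upto_frozenE t1T m1); case: (m == K.+1); rewrite ?mul1r ?mul0r; lra.
Qed.

Lemma weight_upto_frozen_growth T : (t1 <= T)%N ->
  (W i j T K.+1)%:R - (W i j t1 K.+1)%:R
  = (column_visits j T)%:R - (column_visits j t1)%:R :> R.
Proof.
move=> t1T; have := wden_total i j T; have := wden_total i j t1.
rewrite (visits_frozen t1T) (wden_frozen t1T (leqnn _)) -!natr1; lra.
Qed.

Hypothesis column_visits_unbounded : forall M, exists t, (M <= column_visits j t)%N.

(* Once [(i,j)] is no longer played, the weight of [s i j K.+1] grows without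
   bound, so every later weighted average equals [s i j K.+1]. *)
Lemma stilde_frozen n : (K.+1 <= n)%N -> stilde ia ja s i j n = s i j K.+1.
Proof.
move=> Kn; apply: (cvg_lim (@Rhausdorff R)); apply/cvgrPdist_le => e e0.
set N := wnum i j t1 n; set D := wden i j t1 n; set x := s i j K.+1.
have Dpos : 0 < D by apply: lt_le_trans (wden_ge i j t1 n); rewrite ltr0n; lia.
pose M := Num.Def.truncn (`|x * D - N| / e).
have [t2 Ht2] := column_visits_unbounded (column_visits j t1 + M.+1)%N.
exists (maxn t1 t2) => // T /= HT.
have t1T : (t1 <= T)%N by apply: leq_trans HT; rewrite leq_maxl.
have t2T : (t2 <= T)%N by apply: leq_trans HT; rewrite leq_maxr.
rewrite stilde_uptoE (wnum_frozen t1T Kn) (wden_frozen t1T Kn).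
rewrite (weight_upto_frozen_growth t1T) -/N -/D -/x.
set d := (column_visits j T)%:R - (column_visits j t1)%:R.
have dge : `|x * D - N| / e < d.
  have := truncnS_gt (`|x * D - N| / e).
  have : M.+1%:R + (column_visits j t1)%:R <= (column_visits j T)%:R :> R.
    by rewrite -natrD ler_nat addnC; apply: leq_trans Ht2 (column_visits_mono ja j t2T).
  rewrite /d; lra.
have d0 : 0 <= d by apply: le_trans (ltW dge); rewrite divr_ge0 // ltW.
have Dd : 0 < D + d by lra.
rewrite (_ : x - (N + d * x) / (D + d) = (x * D - N) / (D + d)); last first.
  by field; rewrite gt_eqF.
rewrite normrM normrV ?unitfE ?gt_eqF // (gtr0_norm Dd) ler_pdivrMr //.
rewrite ltr_pdivrMr // in dge; nra.
Qed.

Lemma wnum_ge_visits_bounded t : (t1 <= t)%N ->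
  wnum i j t1 K.+1 - L * wden i j t1 K.+1 + L * (column_visits j t).+1%:R
  <= wnum i j t (visits i j t).+1.
Proof.
move=> t1t; have xL : L <= s i j K.+1.
  by rewrite -(@stilde_frozen (maxn n0 K.+1)) ?leq_maxr // stilde_ge ?leq_maxl.
rewrite (visits_frozen t1t) (wnum_frozen t1t (leqnn _)).
rewrite (weight_upto_frozen_growth t1t) (wden_total i j t1).
have := column_visits_mono ja j t1t; rewrite -(ler_nat R) -!natr1 => hm; nra.
Qed.

End LowerBound.

Lemma column_reward_ge0 i j t : (forall n, 0 <= s i j n) -> 0 <= column_reward i j t.
Proof. by move=> s0; apply: sumr_ge0 => u _; apply: mulr_ge0. Qed.

Lemma column_reward_ge_of_eventually i j L t0 C0 : (forall n, 0 <= s i j n) ->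
  (forall t, (t0 <= t)%N -> (column_visits j t)%:R * L - C0 <= column_reward i j t) ->
  exists2 C, 0 <= C & forall t, (column_visits j t)%:R * L - C <= column_reward i j t.
Proof.
move=> s0 H; exists (`|C0| + t0%:R * `|L|) => [|t]; first exact: addr_ge0.
have := ler_norm C0; have := ler_norm L; have : 0 <= t0%:R * `|L| :> R by [].
case: (leqP t0 t) => [/H | tt0]; first lra.
have : (column_visits j t)%:R <= t0%:R :> R.
  by rewrite ler_nat; apply: leq_trans (column_visits_le ja j t) (ltnW tt0).
have := column_reward_ge0 t s0; have : 0 <= (column_visits j t)%:R :> R by [].
have : 0 <= `|L| by []; have : 0 <= `|C0| by []; nra.
Qed.

Lemma column_reward_ge i j L : (forall n, 0 <= s i j n <= 1) ->
  (exists n0, forall n, (n0 <= n)%N -> L <= stilde ia ja s i j n) ->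
  exists2 C, 0 <= C & forall t, (column_visits j t)%:R * L - C <= column_reward i j t.
Proof.
move=> s01 [n0 stilde_ge']; set n1 := maxn n0 1.
have n1_gt0 : (1 <= n1)%N by rewrite leq_maxr.
have stilde_ge n : (n1 <= n)%N -> L <= stilde ia ja s i j n.
  by move=> n1n; apply: stilde_ge'; apply: leq_trans n1n; rewrite leq_maxl.
have s0 n : 0 <= s i j n by case/andP: (s01 n).
have s1 n : s i j n <= 1 by case/andP: (s01 n).
have := ler_norm L; have := ler_norm (- L); rewrite normrN => hL' hL.
case: (nat_unbounded_or_bounded (visits i j)) => [unb | [M visits_le]].
  have [t0 Ht0] := unb n1.
  apply: (@column_reward_ge_of_eventually _ _ _ t0 (1 + `|L|)) => // t t0t.
  have := wnum_ge_visits_unbounded stilde_ge n1_gt0 unb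
    (leq_trans Ht0 (visit_count_mono ia ja i j t0t)).
  rewrite column_rewardE -natr1 mulrDr mulr1 mulrC.
  by have := s1 (visits i j t).+1; lra.
have [t1 visits_frozen] :=
  nondecreasing_bounded_eventually_const (visit_count_mono ia ja i j) visits_le.
case: (nat_unbounded_or_bounded (column_visits j)) => [unbN | [B column_le]].
  set S := wnum i j t1 (visits i j t1).+1 - L * wden i j t1 (visits i j t1).+1.
  apply: (@column_reward_ge_of_eventually _ _ _ t1 (1 + `|L| + `|S|)) => // t t1t.
  have := wnum_ge_visits_bounded stilde_ge visits_frozen unbN t1t.
  rewrite -/S column_rewardE -natr1 mulrDr mulr1 mulrC.
  have := ler_norm (- S); rewrite normrN.
  by have := s1 (visits i j t).+1; lra.
apply: (@column_reward_ge_of_eventually _ _ _ 0 (B%:R * `|L|)) => // t _.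
have : (column_visits j t)%:R <= B%:R :> R by rewrite ler_nat.
have := column_reward_ge0 t s0; have : 0 <= (column_visits j t)%:R :> R by [].
nra.
Qed.

Lemma bandit_sum_ge (v : I -> J -> R) (a : R) :
  (forall i j n, 0 <= s i j n <= 1) ->
  (forall i j, exists n0, forall n, (n0 <= n)%N -> v i j - a <= stilde ia ja s i j n) ->
  exists2 C, 0 <= C & forall i0 t, \sum_(1 <= u < t.+1) v i0 (ja u)
    <= \sum_(1 <= u < t.+1) bandit_reward ia ja s i0 u + t%:R * a + C.
Proof.
move=> s01 stilde_ge.
have /fin_all_exists2 [C C0 HC] : forall ij : I * J, exists2 C, 0 <= C &
    forall t, (column_visits ij.2 t)%:R * (v ij.1 ij.2 - a) - C
              <= column_reward ij.1 ij.2 t.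
  by move=> [i j]; apply: column_reward_ge.
exists (\sum_i \sum_j C (i, j)) => [|i0 t].
  by do 2!apply: sumr_ge0 => ? _.
have Ci0 : \sum_j C (i0, j) <= \sum_i \sum_j C (i, j).
  rewrite (bigD1 i0) //= lerDl; do 2!apply: sumr_ge0 => ? _; exact: C0.
have hv : \sum_j (column_visits j t)%:R * v i0 j = \sum_(1 <= u < t.+1) v i0 (ja u).
  exact: sum_column_visits.
have ha : \sum_j (column_visits j t)%:R * a = t%:R * a.
  by rewrite (sum_column_visits ja (fun=> a)) sumr_const_nat subn1 mulr_natl.
have : \sum_j ((column_visits j t)%:R * (v i0 j - a) - C (i0, j))
       <= \sum_j column_reward i0 j t by apply: ler_sum => j _; exact: HC (i0, j) t.
under eq_bigr do rewrite mulrBr.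
rewrite -bandit_reward_sumE !sumrB hv ha.
lra.
Qed.

Lemma played_sum_le (v : I -> J -> R) (a : R) :
  0 <= a -> (forall i j n, 0 <= s i j n <= 1) ->
  (forall i j, exists N, forall n, (N <= n)%N -> `|sbar s i j n - v i j| <= a) ->
  exists C, forall t, \sum_(1 <= u < t.+1) bandit_reward ia ja s (ia u) u
    - \sum_(1 <= u < t.+1) v (ia u) (ja u) <= t%:R * a + C.
Proof.
move=> a0 s01 sbar_near.
have /fin_all_exists [N HN] : forall ij : I * J, exists N, forall n, (N <= n)%N ->
    `|sbar s ij.1 ij.2 n - v ij.1 ij.2| <= a by move=> [i j]; apply: sbar_near.
exists (\sum_i \sum_j (N (i, j))%:R * (1 + `|v i j|)) => t.
have -> : t%:R * a = \sum_i \sum_j \sum_(1 <= n < (visits i j t).+1) a.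
  by rewrite (sum_visits_regroup ia ja (fun _ _ _ => a)) sumr_const_nat subn1 mulr_natl.
rewrite -sumrB (@eq_big_nat _ _ _ _ _ _
  (fun u => s (ia u) (ja u) (visits (ia u) (ja u) u) - v (ia u) (ja u))); last first.
  by move=> u /andP [u1 _]; rewrite bandit_reward_played.
rewrite -(sum_visits_regroup ia ja (fun i j n => s i j n - v i j)) -!big_split /=.
apply: ler_sum => i _; rewrite -big_split /=; apply: ler_sum => j _.
rewrite sumr_const_nat subn1 /= -[a *+ _]mulr_natl.
exact: (sum_sub_le_of_mean_near a0 (s01 i j) (HN (i, j))).
Qed.

Lemma matrix_regret_limsup_le (v : I -> J -> R) eps c :
  0 <= eps -> 0 <= c -> (forall i j n, 0 <= s i j n <= 1) ->
  limsup_le (bandit_regret ia ja s) eps ->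
  (forall i j, limsup_le (fun n => `|sbar s i j n - v i j|) (c * eps)) ->
  (forall i j, limsup_le (fun n => `|stilde ia ja s i j n - sbar s i j n|) eps) ->
  limsup_le (matrix_regret ia ja v) (2 * (c + 1) * eps).
Proof.
move=> eps0 c0 s01 /limsup_leP regret_le sbar_le stilde_le.
apply/limsup_leP => e e0; set e' := e / 4.
have e'0 : 0 < e' by rewrite divr_gt0.
have ceps0 : 0 <= c * eps by rewrite mulr_ge0.
have stilde_ge i j : exists n0, forall n, (n0 <= n)%N ->
    v i j - ((c + 1) * eps + e') <= stilde ia ja s i j n.
  have /limsup_leP/(_ (e' / 2)) := stilde_le i j.
  have /limsup_leP/(_ (e' / 2)) := sbar_le i j.
  move=> [|N1 HN1]; first by rewrite divr_gt0.
  move=> [|N2 HN2]; first by rewrite divr_gt0.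
  exists (maxn N1 N2) => n; rewrite geq_max => /andP [/HN1 h1 /HN2 h2].
  by move: h1 h2 => /ler_normlP [h1 h1'] /ler_normlP [h2 h2']; lra.
have sbar_near i j : exists N, forall n, (N <= n)%N ->
    `|sbar s i j n - v i j| <= c * eps + e'.
  by have /limsup_leP/(_ e' e'0) := sbar_le i j.
have [C1 _ bandit_ge] := bandit_sum_ge s01 stilde_ge.
have [C2 played_le] := played_sum_le (addr_ge0 ceps0 (ltW e'0)) s01 sbar_near.
have [N0 HN0] := regret_le e' e'0.
have [N1 HN1] := eventually_le_mulrn (C1 + C2) e'0.
exists (maxn N0 (maxn N1 1)) => t; rewrite !geq_max => /and3P [/HN0 + /HN1 + t1].
rewrite /matrix_regret /bandit_regret; set T : R := t%:R.
have T0 : 0 < T by rewrite ltr0n.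
rewrite mulrC ler_pdivrMr // [_ * T]mulrC => regret CT.
rewrite mulrC ler_pdivrMr // -/T.
have := played_le t; rewrite -/T.
have : fmax (fun i0 => \sum_(1 <= u < t.+1) v i0 (ja u))
  <= fmax (fun k => \sum_(1 <= u < t.+1) bandit_reward ia ja s k u)
     + T * ((c + 1) * eps + e') + C1.
  apply: (fmax_le (ia 0%N)) => i0; apply: le_trans (bandit_ge i0 t) _.
  by rewrite lerD2r lerD2r fmax_ub.
have -> : e = 4 * e' by rewrite /e'; field.
have : 0 <= T * eps by rewrite mulr_ge0 // ltW.
have : 0 <= T * (c * eps) by rewrite mulr_ge0 // ltW.
nra.
Qed.

End Rewards.

Theorem proposition2 (R : realType) (d : measure_display)
  (Omega : measurableType d) (P : probability Omega R)
  (I J : finType)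
  (ia : Omega -> nat -> I) (ja : Omega -> nat -> J)
  (s : Omega -> I -> J -> nat -> R)
  (v : I -> J -> R) (eps c : R) :
  0 <= eps -> 0 <= c ->
  (* returned values are terminal utilities, hence in [0,1] *)
  (forall w i j n, 0 <= s w i j n <= 1) ->
  (* A is eps-Hannan consistent (on its run at h against the adversary) *)
  {ae P, forall w, limsup_le (bandit_regret (ia w) (ja w) (s w)) eps} ->
  (* a.s. limsup_n |sbar_ij(n) - v_ij| <= c eps for each i, j *)
  (forall i j, {ae P, forall w,
     limsup_le (fun n => `|sbar (s w) i j n - v i j|) (c * eps)}) ->
  (* A is eps-UPO (at h) *)
  (forall i j, {ae P, forall w,
     limsup_le (fun n => `|stilde (ia w) (ja w) (s w) i j n
                           - sbar (s w) i j n|) eps}) ->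
  {ae P, forall w,
     limsup_le (matrix_regret (ia w) (ja w) v) (2 * (c + 1) * eps)}.
Proof.
move=> eps0 c0 s01 hannan sbar_le upo.
have F := ae_filter_ringOfSetsType P.
have sbar_le_all := @filter_forall _ (I * J)%type _ _ F (fun ij => sbar_le ij.1 ij.2).
have upo_all := @filter_forall _ (I * J)%type _ _ F (fun ij => upo ij.1 ij.2).
have both := @filterS2 _ _ F _ _ _ (fun w a b => conj a b) sbar_le_all upo_all.
apply: (@filterS2 _ _ F _ _ _ _ hannan both) => w hannan_w [sbar_le_w upo_w].
apply: (matrix_regret_limsup_le eps0 c0 (s01 w) hannan_w) => i j.
- exact: (sbar_le_w (i, j)).
- exact: (upo_w (i, j)).
Qed.
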